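(* Suppose $n=3$. Then $x\sigma(x)+\sigma(x)\sigma^2(x)+\sigma^2(x)x=0$ and $N_\mathbb{K}(x+\sigma(x))=-N_\mathbb{K}(x)$.
   Context: Let $n=3$ and $p$ a prime with $p\equiv 1 \pmod 3$. Let $\zeta_p=e^{2\pi i/p}$, let $r$ be a primitive root modulo $p$, and let $\sigma$ be the automorphism of $\mathbb{Q}(\zeta_p)$ with $\sigma(\zeta_p)=\zeta_p^r$. Let $\mathbb{K}=\{y\in\mathbb{Q}(\zeta_p):\sigma^3(y)=y\}$, a cubic field. Let $\alpha=\prod_{j=0}^{(p-3)/2}(1-\zeta_p^{r^j})$, $\lambda$ an integer with $\lambda(r-1)\equiv1\pmod p$, $z=\zeta_p^{\lambda}\alpha(1-\zeta_p)$, $x=\mathrm{Tr}_{\mathbb{Q}(\zeta_p)/\mathbb{K}}(z)=\sum_{j=1}^{(p-1)/3}\sigma^{3j}(z)$. $N_\mathbb{K}$ is the norm from $\mathbb{K}$ to $\mathbb{Q}$. *)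

From HB Require Import structures.
From mathcomp Require Import all_boot all_order all_algebra all_field.
Set Implicit Arguments. Unset Strict Implicit. Unset Printing Implicit Defensive.
Import Order.TTheory GRing.Theory Num.Theory.
Local Open Scope ring_scope.

(* zeta_p = e^{2 pi i/p}: p.-root (-1) is the p-th root of -1 with minimal
   nonnegative argument, i.e. e^{i pi/p}; its square is e^{2 pi i/p}. *)
Definition zeta (p : nat) : algC := (p.-root (-1)) ^+ 2.

Definition alpha (p r : nat) : algC :=
  \prod_(0 <= j < ((p - 3) %/ 2).+1) (1 - zeta p ^+ (r ^ j)).

Definition zz (p r : nat) (lam : int) : algC :=
  zeta p ^ lam * alpha p r * (1 - zeta p).

(* x = Tr_{Q(zeta)/K}(z) = sum_{j=1}^{(p-1)/3} sigma^{3j}(z) *)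
Definition xx (p r : nat) (lam : int) (sigma : algC -> algC) : algC :=
  \sum_(1 <= j < ((p - 1) %/ 3).+1) iter (3 * j) sigma (zz p r lam).

(* Norm from the cubic field K (fixed field of sigma^3) to Q:
   product over Gal(K/Q) = {1, sigma, sigma^2} restricted to K. *)
Definition normK (sigma : algC -> algC) (y : algC) : algC :=
  y * sigma y * sigma (sigma y).

From HB Require Import structures.
From mathcomp Require Import all_boot all_order all_algebra all_field.
From mathcomp Require Import zify ring.
Import Order.TTheory GRing.Theory Num.Theory.
Local Open Scope ring_scope.
Set Implicit Arguments. Unset Strict Implicit. Unset Printing Implicit Defensive.

(* Write p - 1 = 6q, zeta = zeta p, and let eta_k be the signed period
   sum_(j < 2q) (-1)^(3j+k) zeta^(r^(3j+k)).  Under sigma the product alpha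
   telescopes to -zeta^(-1) alpha, so with lambda (r - 1) = 1 mod p the factor
   w = zeta^lambda alpha satisfies sigma w = -w; hence sigma^i z = w ((-1)^i -
   (-1)^i zeta^(r^i)), x = -w eta_0, sigma x = -w eta_1, sigma^2 x = -w eta_2
   and sigma^3 x = x.  In eta_0 eta_1 + eta_1 eta_2 + eta_2 eta_0, the terms
   with a given offset 3s + 1 between the two indices sum zeta^(c r^i) over all
   i < p - 1, with c = 1 + r^(3s+1) prime to p, which gives -1; the resulting
   alternating sum over s < 2q vanishes.  The norm identity then follows from
   (a+b)(b+c)(c+a) = (a+b+c)(ab+bc+ca) - abc. *)

Lemma sum_shift_periodic {V : nmodType} (F : nat -> V) m c :
  (forall j, F (j + m)%N = F j) ->
  \sum_(0 <= j < m) F (j + c)%N = \sum_(0 <= j < m) F j.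
Proof.
case: m => [|m] F_per; first by rewrite !big_geq.
elim: c => [|c IHc]; first by under eq_bigr do rewrite addn0.
rewrite -IHc big_nat_recr // big_nat_recl // addrC addnS -addSn addnC F_per.
by congr (_ + _); apply: eq_bigr => j _; rewrite addSnnS.
Qed.

Lemma sum_nat_mul_split {V : nmodType} (F : nat -> V) m n :
  \sum_(0 <= i < m * n) F i = \sum_(0 <= t < n) \sum_(0 <= j < m) F (n * j + t)%N.
Proof.
rewrite big_nat_mul exchange_big; apply: eq_bigr => j _.
rewrite -[(j * n)%N]add0n big_addn mulSn addnK.
by apply: eq_bigr => t _; rewrite addnC mulnC.
Qed.

Lemma sum_sign_double (R : ringType) m : \sum_(0 <= j < m.*2) (-1) ^+ j = 0 :> R.
Proof.
elim: m => [|m IHm]; first by rewrite big_geq.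
by rewrite doubleS !big_nat_recr //= IHm add0r exprS mulN1r addrN.
Qed.

Lemma prim_root_half (R : idomainType) h (w : R) :
  (h * 2).-primitive_root w -> w ^+ h = -1.
Proof.
move=> w_prim; have h_gt0 : (0 < h)%N by have := prim_order_gt0 w_prim; lia.
have wh_neq1 : w ^+ h != 1.
  by rewrite -[1](expr0 w) (eq_prim_root_expr w_prim) mod0n modn_small; lia.
have /eqP : (w ^+ h) ^+ 2 = 1 by rewrite -exprM prim_expr_order.
by rewrite sqrf_eq1 (negbTE wh_neq1) => /eqP.
Qed.

Lemma sum_prim_root_expr (R : idomainType) n (w : R) :
  (1 < n)%N -> n.-primitive_root w -> \sum_(i < n) w ^+ i = 0.
Proof.
move=> n_gt1 w_prim; have /eqP := subrX1 w n.
rewrite prim_expr_order // subrr eq_sym mulf_eq0 subr_eq0 => /orP[|/eqP//].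
by rewrite -{1}(expr1 w) -(expr0 w) (eq_prim_root_expr w_prim) mod0n modn_small.
Qed.

Lemma prim_root_exprz_mod (F : fieldType) n (z : F) (a b : int) :
  n.-primitive_root z -> (a = b %[mod n])%Z -> z ^ a = z ^ b.
Proof.
move=> z_prim /eqP; rewrite eqz_mod_dvd => /dvdzP[k ab].
have z_unit : z \is a GRing.unit.
  by rewrite unitfE (prim_root_eq0 z_prim) -lt0n (prim_order_gt0 z_prim).
rewrite -(subrK b a) ab exprzDr // (mulrC k) -exprz_exp -exprnP.
by rewrite (prim_expr_order z_prim) exp1rz mul1r.
Qed.

Lemma prime_pred_mul6 p : prime p -> (p %% 3 = 1)%N -> exists q, p.-1 = (6 * q)%N.
Proof.
move=> p_prime p_mod3; exists (p %/ 6)%N.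
have [p_eq2|p_odd] := even_prime p_prime; first by rewrite p_eq2 in p_mod3.
have p_mod2 : (p %% 2 = 1)%N by rewrite modn2 p_odd.
lia.
Qed.

Lemma zeta_prim p : prime p -> p.-primitive_root (zeta p).
Proof.
move=> p_prime; have p_gt1 := prime_gt1 p_prime; have p_gt0 := ltnW p_gt1.
pose rho : algC := p.-root (-1); have zetaE : zeta p = rho ^+ 2 := erefl.
have rhoX : rho ^+ p = -1 by apply: rootCK.
have zetaX : zeta p ^+ p = 1 by rewrite zetaE exprAC rhoX sqrrN expr1n.
have [m m_prim m_dvd] := prim_order_exists p_gt0 zetaX.
have [m1|m_neq1] := eqVneq m 1%N; last first.
  by have /(prime_nt_dvdP p_prime m_neq1) m_eq := m_dvd; rewrite m_eq in m_prim.
move: m_prim; rewrite m1 zetaE => /prim_expr_order /eqP; rewrite expr1 sqrf_eq1.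
case/orP=> /eqP rho_eq.
  move: rhoX; rewrite rho_eq expr1n => /eqP.
  by rewrite -subr_eq0 opprK -(natrD _ 1 1) pnatr_eq0.
by have := rootC_lt0 (-1 : algC) p_gt1; rewrite -/rho rho_eq ltrN10.
Qed.

Section SignedPeriods.

Variables (p q r : nat).
Hypothesis p_pred : p.-1 = (6 * q)%N.
Hypothesis r_prim : (p.-1).-primitive_root (r%:R : 'F_p).

Lemma r_expr_half : (r ^ (3 * q))%:R = -1 :> 'F_p.
Proof.
rewrite natrX; apply: prim_root_half.
by rewrite (_ : 3 * q * 2 = p.-1)%N // p_pred mulnAC.
Qed.

Lemma one_add_r_expr_neq0 s : (s < 2 * q)%N -> (1 + r ^ (3 * s + 1))%:R != 0 :> 'F_p.
Proof.
move=> s_lt; rewrite natrD addrC addr_eq0 -r_expr_half; apply/eqP => /eqP.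
rewrite !natrX (eq_prim_root_expr r_prim) p_pred !modn_small; lia.
Qed.

Hypothesis p_prime : prime p.
Variables (F : fieldType) (xi : F).
Hypothesis xi_prim : p.-primitive_root xi.

Lemma xi_expr_Fp a b : a%:R = b%:R :> 'F_p -> xi ^+ a = xi ^+ b.
Proof.
move=> /(congr1 val); rewrite /= !val_Fp_nat // => /eqP.
by rewrite -(eq_prim_root_expr xi_prim) => /eqP.
Qed.

Lemma sum_xi_orbit c : c%:R != 0 :> 'F_p -> \sum_(0 <= i < p.-1) xi ^+ (c * r ^ i) = -1.
Proof.
move=> c_neq0.
have sum_Fp : \sum_(a : 'F_p) xi ^+ a = 0.
  have -> : \sum_(a : 'F_p) xi ^+ a = \sum_(i < p) xi ^+ i.
    (* ['F_p] is by definition ['I_(Zp_trunc (pdiv p)).+2]. *)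
    by rewrite -[in RHS](Fp_cast p_prime).
  exact: sum_prim_root_expr (prime_gt1 p_prime) xi_prim.
pose phi (i : 'I_p.-1) : 'F_p := (c * r ^ i)%:R.
have phi_inj : injective phi.
  move=> i j; rewrite /phi !natrM !natrX => /(mulfI c_neq0) /eqP.
  by rewrite (eq_prim_root_expr r_prim) !modn_small // => /eqP /ord_inj.
have phi_im : phi @: setT = ~: [set 0].
  apply/eqP; rewrite eqEcard cardsC1 card_Fp // card_imset // cardsT card_ord leqnn andbT.
  apply/subsetP => _ /imsetP[i _ ->]; rewrite !inE /phi natrM natrX.
  rewrite mulf_neq0 // expf_neq0 // (prim_root_eq0 r_prim).
  by rewrite -subn1 subn_eq0 -ltnNge prime_gt1.
rewrite big_mkord (eq_bigr (fun i => xi ^+ phi i)); last first.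
  by move=> i _; apply: xi_expr_Fp; rewrite natr_Zp.
rewrite (eq_bigl (fun i => i \in [set: 'I_p.-1])); last by move=> i; rewrite inE.
rewrite -(big_imset (fun a : 'F_p => xi ^+ a) (in2W phi_inj)) /= phi_im.
move: sum_Fp; rewrite (bigD1 0) //= expr0 => /eqP; rewrite addrC addr_eq0 => /eqP <-.
by apply: eq_bigl => a; rewrite !inE.
Qed.

Definition signed_root i := (-1) ^+ i * xi ^+ (r ^ i).

Definition signed_period k := \sum_(0 <= j < 2 * q) signed_root (3 * j + k).

Lemma signed_root_periodic i : signed_root (i + p.-1) = signed_root i.
Proof.
have sign_p_pred : (-1) ^+ p.-1 = 1 :> F by rewrite -signr_odd p_pred oddM.
rewrite /signed_root exprD sign_p_pred mulr1; congr (_ * _); apply: xi_expr_Fp.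
by rewrite !natrX exprD (prim_expr_order r_prim) mulr1.
Qed.

Lemma signed_rootM i t :
  signed_root i * signed_root (i + t) = (-1) ^+ t * xi ^+ ((1 + r ^ t) * r ^ i).
Proof.
rewrite /signed_root mulrACA -!exprD; congr (_ * _).
  by rewrite -[LHS]signr_odd addnA !oddD addbb /= signr_odd.
by rewrite expnD mulnDl mul1n mulnC.
Qed.

Lemma signed_period_shift k c :
  \sum_(0 <= j < 2 * q) signed_root (3 * (j + c) + k) = signed_period k.
Proof.
pose G j := signed_root (3 * j + k).
have G_per j : G (j + 2 * q)%N = G j.
  by rewrite /G -[RHS]signed_root_periodic p_pred; congr signed_root; lia.
rewrite /signed_period -(sum_shift_periodic c G_per).
by apply: eq_bigr => j _; rewrite /G mulnDr.
Qed.

Lemma signed_period3 : signed_period 3 = signed_period 0%N.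
Proof.
rewrite -(signed_period_shift 0 1); apply: eq_bigr => j _; congr signed_root; lia.
Qed.

Lemma signed_periodM k :
  signed_period k * signed_period k.+1 =
  \sum_(0 <= s < 2 * q) (-1) ^+ (3 * s + 1) *
    \sum_(0 <= j < 2 * q) xi ^+ ((1 + r ^ (3 * s + 1)) * r ^ (3 * j + k)).
Proof.
rewrite {1}/signed_period big_distrl.
under [RHS]eq_bigr do rewrite big_distrr.
rewrite [RHS]exchange_big; apply: eq_bigr => j _.
rewrite -(signed_period_shift k.+1 j) big_distrr /=; apply: eq_bigr => s _.
by rewrite -signed_rootM; congr (_ * signed_root _); lia.
Qed.

Lemma signed_period_e2 :
  signed_period 0%N * signed_period 1%N + signed_period 1%N * signed_period 2 +
  signed_period 2 * signed_period 0%N = 0.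
Proof.
transitivity (\sum_(0 <= k < 3) signed_period k * signed_period k.+1).
  by rewrite !big_nat_recr //= big_geq // add0r signed_period3.
under eq_bigr do rewrite signed_periodM.
rewrite exchange_big /= -[RHS](sum_sign_double F q) -mul2n.
apply: eq_big_nat => s /andP[_ s_lt].
rewrite -big_distrr /= -(sum_nat_mul_split (fun i => xi ^+ ((1 + r ^ (3 * s + 1)) * r ^ i))).
have -> : (2 * q * 3 = p.-1)%N by lia.
rewrite sum_xi_orbit ?one_add_r_expr_neq0 //.
rewrite -exprSr (_ : (3 * s + 1).+1 = s + 2 * (s + 1))%N; last by lia.
by rewrite exprD exprM sqrrN !expr1n mulr1.
Qed.

Section Conjugation.

Variable sigma : {rmorphism F -> F}.
Hypothesis sigma_xi : sigma xi = xi ^+ r.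

Lemma rmorph_xi_expr n : sigma (xi ^+ (r ^ n)) = xi ^+ (r ^ n.+1).
Proof. by rewrite rmorphXn sigma_xi -exprM -expnS. Qed.

Lemma rmorph_signed_root i : sigma (signed_root i) = - signed_root i.+1.
Proof.
by rewrite rmorphM rmorph_sign rmorph_xi_expr /signed_root exprS mulN1r mulNr opprK.
Qed.

Lemma rmorph_signed_period k : sigma (signed_period k) = - signed_period k.+1.
Proof.
by rewrite rmorph_sum -sumrN; apply: eq_bigr => j _; rewrite rmorph_signed_root addnS.
Qed.

Lemma rmorph_prod_one_sub n :
  sigma (\prod_(0 <= j < n) (1 - xi ^+ (r ^ j))) * (1 - xi) =
  \prod_(0 <= j < n) (1 - xi ^+ (r ^ j)) * (1 - xi ^+ (r ^ n)).
Proof.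
rewrite rmorph_prod -big_nat_recr // -{2}(expr1 xi) -(expn0 r) mulrC big_nat_recl //.
by congr (_ * _); apply: eq_bigr => j _; rewrite rmorphB rmorph1 rmorph_xi_expr.
Qed.

End Conjugation.

End SignedPeriods.

Lemma normK_add_rmorph (sigma : {rmorphism algC -> algC}) x :
  sigma (sigma (sigma x)) = x ->
  x * sigma x + sigma x * sigma (sigma x) + sigma (sigma x) * x = 0 ->
  normK sigma (x + sigma x) = - normK sigma x.
Proof.
move=> sigma3_x e2; rewrite /normK !rmorphD sigma3_x.
set y := sigma x; set z := sigma y.
transitivity ((x + y + z) * (x * y + y * z + z * x) - x * y * z); first by ring.
by rewrite e2 mulr0 sub0r.
Qed.

Section CubicTrace.

Variables (p q r : nat) (sigma : {rmorphism algC -> algC}).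
Hypotheses (p_prime : prime p) (p_pred : p.-1 = (6 * q)%N).
Hypothesis r_prim : (p.-1).-primitive_root (r%:R : 'F_p).
Hypothesis sigma_zeta : sigma (zeta p) = zeta p ^+ r.

Let zeta_p_prim := zeta_prim p_prime.
Local Notation eta := (signed_period q r (zeta p)).

Lemma rmorph_alpha : sigma (alpha p r) = - zeta p ^+ p.-1 * alpha p r.
Proof.
have p_gt1 := prime_gt1 p_prime.
have alpha_len : ((p - 3) %/ 2).+1 = (3 * q)%N by lia.
have zeta_neq1 : 1 - zeta p != 0.
  rewrite subr_eq0 -(expr0 (zeta p)) -{2}(expr1 (zeta p)) (eq_prim_root_expr zeta_p_prim).
  by rewrite mod0n modn_small.
have zeta_inv : zeta p ^+ p.-1 * zeta p = 1.
  by rewrite -exprSr prednK ?prime_gt0 // prim_expr_order.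
apply: (mulIf zeta_neq1); rewrite /alpha alpha_len rmorph_prod_one_sub //.
have -> : zeta p ^+ (r ^ (3 * q)) = zeta p ^+ p.-1.
  apply: (xi_expr_Fp p_prime zeta_p_prim); rewrite (r_expr_half p_pred r_prim).
  by rewrite -subn1 natrB ?prime_gt0 // pchar_Fp_0 // sub0r.
transitivity (\prod_(0 <= j < 3 * q) (1 - zeta p ^+ (r ^ j)) *
  (zeta p ^+ p.-1 * zeta p - zeta p ^+ p.-1)); first by rewrite zeta_inv.
by ring.
Qed.

Variable lam : int.
Hypothesis lam_inv : (lam * (r%:Z - 1) = 1 %[mod p%:Z])%Z.
Local Notation w := (zeta p ^ lam * alpha p r).

Lemma rmorph_zeta_lam_alpha : sigma w = - w.
Proof.
have zeta_unit : zeta p \is a GRing.unit.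
  by rewrite unitfE (prim_root_eq0 zeta_p_prim) -lt0n prime_gt0.
rewrite rmorphM rmorph_alpha rmorphXz // sigma_zeta mulNr mulrN mulrA !exprnP exprz_exp.
rewrite -exprzDr //; congr (- (_ * _)); apply: prim_root_exprz_mod zeta_p_prim _.
apply/eqP; rewrite eqz_mod_dvd predn_int ?prime_gt0 //.
have -> : r%:Z * lam + (p%:Z - 1) - lam = (lam * (r%:Z - 1) - 1) + p%:Z by ring.
by rewrite rpredD ?dvdzz // -eqz_mod_dvd; apply/eqP.
Qed.

Lemma iter_rmorph_zz i :
  iter i sigma (zz p r lam) = w * ((-1) ^+ i - signed_root r (zeta p) i).
Proof.
elim: i => [|i IHi]; first by rewrite /zz /signed_root /= !expr0 expn0 expr1 mul1r.
rewrite iterS IHi rmorphM rmorph_zeta_lam_alpha rmorphB rmorph_sign.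
by rewrite (rmorph_signed_root sigma_zeta) exprS; ring.
Qed.

Lemma xx_signed_period : xx p r lam sigma = - w * eta 0%N.
Proof.
rewrite /xx (_ : (p - 1) %/ 3 = 2 * q)%N; last by have := prime_gt1 p_prime; lia.
rewrite big_add1 succnK; under eq_bigr do rewrite iter_rmorph_zz.
rewrite -mulr_sumr sumrB.
have -> : \sum_(0 <= j < 2 * q) (-1) ^+ (3 * j.+1) = 0 :> algC.
  have sign3 n : (-1) ^+ (3 * n) = (-1) ^+ n :> algC.
    by rewrite -signr_odd oddM /= signr_odd.
  under eq_bigr do rewrite sign3 exprS mulN1r.
  by rewrite sumrN mul2n sum_sign_double oppr0.
rewrite -(signed_period_shift p_pred r_prim p_prime zeta_p_prim 0 1) sub0r mulrN mulNr.
by congr (- (w * _)); apply: eq_bigr => j _; rewrite addn0 addn1.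
Qed.

Lemma rmorph_scaled_period k : sigma (- w * eta k) = - w * eta k.+1.
Proof.
by rewrite rmorphM rmorphN rmorph_zeta_lam_alpha (rmorph_signed_period q sigma_zeta) mulrNN.
Qed.

Local Notation x := (xx p r lam sigma).

Lemma rmorph3_xx : sigma (sigma (sigma x)) = x.
Proof.
rewrite xx_signed_period !rmorph_scaled_period.
by rewrite (signed_period3 p_pred r_prim p_prime zeta_p_prim).
Qed.

Lemma e2_xx : x * sigma x + sigma x * sigma (sigma x) + sigma (sigma x) * x = 0.
Proof.
rewrite xx_signed_period !rmorph_scaled_period.
transitivity (w ^+ 2 * (eta 0%N * eta 1%N + eta 1%N * eta 2 + eta 2 * eta 0%N)).
  by ring.
by rewrite (signed_period_e2 p_pred r_prim p_prime zeta_p_prim) mulr0.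
Qed.

End CubicTrace.

Theorem mainTheorem9 (p r : nat) (lam : int) (sigma : {rmorphism algC -> algC}) :
  prime p -> (p %% 3 = 1)%N ->
  (p.-1).-primitive_root (r%:R : 'F_p) ->
  (lam * (r%:Z - 1) = 1 %[mod p%:Z])%Z ->
  sigma (zeta p) = zeta p ^+ r ->
  let x := xx p r lam sigma in
  x * sigma x + sigma x * sigma (sigma x) + sigma (sigma x) * x = 0 /\
  normK sigma (x + sigma x) = - normK sigma x.
Proof.
move=> p_prime p_mod3 r_prim lam_inv sigma_zeta x.
have [q p_pred] := prime_pred_mul6 p_prime p_mod3.
have sigma3_x := rmorph3_xx p_prime p_pred r_prim sigma_zeta lam_inv.
have e2 := e2_xx p_prime p_pred r_prim sigma_zeta lam_inv.
by split; last exact: normK_add_rmorph.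
Qed.
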